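(* Let $\mathbf{M}$ be a POMDP, let $k\in\mathbb{N}$, and let $\mathbf{C}=(\mathcal{Q},q_1,\gamma,\delta)$ be a deterministic $k$-FSC for $\mathbf{M}$ with corresponding instantiation $u_{\mathbf{C}}$. Then for every $t\in\mathbb{N}$ (with $t\ge 2$), \[ H^{\mathbf{C}}(S_{t} \mid S^{t-1})= H^{u_{\mathbf{C}}}(S_{\mathbf{M},k,t} \mid S_{\mathbf{M},k, t-1}). \]
   Context: A POMDP is $\mathbf{M}=(\mathcal{S},s_I,\mathcal{A},P,\mathcal{Z},O,R)$ with finite state set $\mathcal{S}$, initial state $s_I$, finite action set $\mathcal{A}$, transition function $P_{s,a,s'}=P(s'|s,a)$, finite observation set $\mathcal{Z}$, observation function $O_{s,z}=O(z|s)$, reward $R:\mathcal{S}\times\mathcal{A}\to\mathbb{R}$. A $k$-finite-state controller ($k$-FSC) is $\mathbf{C}=(\mathcal{Q},q_1,\gamma,\delta)$ with memory states $\mathcal{Q}=\{q_1,\ldots,q_k\}$, initial memory state $q_1$, decision function $\gamma:\mathcal{Q}\times\mathcal{Z}\to\Delta(\mathcal{A})$ and memory transition function $\delta:\mathcal{Q}\times\mathcal{Z}\times\mathcal{A}\to\Delta(\mathcal{Q})$. Under $\mathbf{C}$ the POMDP evolves as: $S_1=s_I$, memory $Q_1=q_1$; at time $t$, $Z_t\sim O(\cdot|S_t)$, $A_t\sim\gamma(\cdot|Q_t,Z_t)$, $S_{t+1}\sim P(\cdot|S_t,A_t)$, $Q_{t+1}\sim\delta(\cdot|Q_t,Z_t,A_t)$.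 $H^{\mathbf{C}}(S_t\mid S^{t-1})$ is the conditional entropy of $S_t$ given $S^{t-1}=(S_1,\ldots,S_{t-1})$ in this process. For $q\in\mathcal{Q}$ let $Succ(q)=\{q'\in\mathcal{Q}:\delta(q'|q,z,a)>0 \text{ for some } z\in\mathcal{Z},a\in\mathcal{A}\}$; $\mathbf{C}$ is a deterministic $k$-FSC if $|Succ(q)|=1$ for all $q\in\mathcal{Q}$. The instantiation $u_{\mathbf{C}}$ determines the Markov chain $\mathbf{D}_{\mathbf{M},k}[u_{\mathbf{C}}]$ with state space $\mathcal{S}\times\mathcal{Q}$, initial state $\langle s_I,q_1\rangle$ and transition probabilities \[ P^{u_{\mathbf{C}}}_{\mathbf{M},k}(\langle s',q'\rangle\mid\langle s,q\rangle)=\sum_{a\in\mathcal{A}}\sum_{z\in\mathcal{Z}} O_{s,z}\,P_{s,a,s'}\,\gamma(a|q,z)\,\delta(q'|q,z,a). \] $(S_{\mathbf{M},k,1},S_{\mathbf{M},k,2},\ldots)$ is the state sequence of this Markov chain, and $H^{u_{\mathbf{C}}}(S_{\mathbf{M},k,t}\mid S_{\mathbf{M},k,t-1})$ is the corresponding conditional entropy (convention $0\log 0=0$). *)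

From HB Require Import structures.
From mathcomp Require Import all_boot all_order all_algebra.
From mathcomp Require Import reals exp.
Set Implicit Arguments. Unset Strict Implicit. Unset Printing Implicit Defensive.
Import Order.TTheory GRing.Theory Num.Theory.
Local Open Scope ring_scope.

Section Defs.
Variable R : realType.

Definition is_distr (T : finType) (p : T -> R) : Prop :=
  (forall x, 0 <= p x) /\ \sum_x p x = 1.

Record POMDP (S A Z : finType) := MkPOMDP {
  pm_sI : S;
  pm_P  : S -> A -> S -> R;   (* pm_P s a s' = P(s'|s,a) *)
  pm_O  : S -> Z -> R;        (* pm_O s z = O(z|s) *)
  pm_R  : S -> A -> R }.

Definition POMDP_wf (S A Z : finType) (M : POMDP S A Z) : Prop :=
  (forall s a, is_distr (pm_P M s a)) /\ (forall s, is_distr (pm_O M s)).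

Record FSC (A Z : finType) (k : nat) := MkFSC {
  fsc_q1    : 'I_k;
  fsc_gamma : 'I_k -> Z -> A -> R;          (* gamma(a|q,z) *)
  fsc_delta : 'I_k -> Z -> A -> 'I_k -> R }. (* delta(q'|q,z,a) *)

Definition FSC_wf (A Z : finType) k (C : FSC A Z k) : Prop :=
  (forall q z, is_distr (fsc_gamma C q z)) /\
  (forall q z a, is_distr (fsc_delta C q z a)).

Definition Succ (A Z : finType) k (C : FSC A Z k) (q : 'I_k) : {set 'I_k} :=
  [set q' | [exists z, exists a, 0 < fsc_delta C q z a q']].

Definition deterministic_FSC (A Z : finType) k (C : FSC A Z k) : Prop :=
  forall q : 'I_k, #|Succ C q| = 1%N.

(* Conditional entropy H(Y|X) of a joint distribution p(x,y) on X * Y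
   (natural logarithm; terms with p(x,y) = 0 vanish, i.e. 0 log 0 = 0). *)
Definition cond_entropy (X Y : finType) (p : X -> Y -> R) : R :=
  - \sum_x \sum_y
      (if p x y == 0 then 0 else p x y * ln (p x y / \sum_y' p x y')).

Variables (S A Z : finType) (k : nat) (M : POMDP S A Z) (C : FSC A Z k).

(* Joint law of (S_1..S_{n+1}, Q_1..Q_{n+1}, Z_1..Z_{n+1}, A_1..A_{n+1})
   in the POMDP under C (index i : 'I_n.+1 stands for time i+1). *)
Definition traj_prob (n : nat) (s : {ffun 'I_n.+1 -> S}) (q : {ffun 'I_n.+1 -> 'I_k})
    (z : {ffun 'I_n.+1 -> Z}) (a : {ffun 'I_n.+1 -> A}) : R :=
  ((s ord0 == pm_sI M) && (q ord0 == fsc_q1 C))%:R *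
  (\prod_(i < n.+1) (pm_O M (s i) (z i) * fsc_gamma C (q i) (z i) (a i))) *
  (\prod_(i < n)
     (pm_P M (s (inord i)) (a (inord i)) (s (inord i.+1)) *
      fsc_delta C (q (inord i)) (z (inord i)) (a (inord i)) (q (inord i.+1)))).

Definition state_seq_prob (n : nat) (s : {ffun 'I_n.+1 -> S}) : R :=
  \sum_(q : {ffun 'I_n.+1 -> 'I_k}) \sum_(z : {ffun 'I_n.+1 -> Z})
    \sum_(a : {ffun 'I_n.+1 -> A}) @traj_prob n s q z a.

Definition snoc_seq (n : nat) (x : {ffun 'I_n.+1 -> S}) (y : S)
  : {ffun 'I_n.+2 -> S} :=
  [ffun i => if unlift ord_max i is Some j then x j else y].

(* H^C(S_t | S^{t-1}) for t = n+2. *)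
Definition H_FSC (n : nat) : R :=
  cond_entropy (fun (x : {ffun 'I_n.+1 -> S}) (y : S) =>
                  @state_seq_prob n.+1 (snoc_seq x y)).

Definition chain_P (x y : S * 'I_k) : R :=
  \sum_(a : A) \sum_(z : Z)
    pm_O M x.1 z * pm_P M x.1 a y.1 * fsc_gamma C x.2 z a * fsc_delta C x.2 z a y.2.

(* chain_dist n = law of S_{M,k,n+1}. *)
Fixpoint chain_dist (n : nat) : S * 'I_k -> R :=
  match n with
  | 0 => fun x => (x == (pm_sI M, fsc_q1 C))%:R
  | m.+1 => fun y => \sum_x chain_dist m x * chain_P x y
  end.

(* H^{u_C}(S_{M,k,t} | S_{M,k,t-1}) for t = n+2. *)
Definition H_chain (n : nat) : R :=
  cond_entropy (fun x y : S * 'I_k => chain_dist n x * chain_P x y).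

End Defs.

From mathcomp Require Import all_boot all_order all_algebra.
From mathcomp Require Import reals exp.
From mathcomp Require Import ring.
Set Implicit Arguments. Unset Strict Implicit. Unset Printing Implicit Defensive.
Import Order.TTheory GRing.Theory Num.Theory.
Local Open Scope ring_scope.

(* Once the memory update is deterministic, the memory at time t is the
   constant q_t = next^(t-1)(q_1), so summing out observations and actions turns
   the state process under C into a Markov chain with kernels
   T_t(s, s') = sum_a sum_z O(z|s) gamma(a|q_t,z) P(s'|s,a); in the product chain
   only the memory q_t is reachable at time t and it moves s by the same T_t.
   Hence both conditional entropies equal sum_s Pr(S_{t-1} = s) H(T_{t-1}(s, .)). *)

Definition entropy (R : realType) (Y : finType) (p : Y -> R) : R :=
  - \sum_y p y * ln (p y).

Lemma cond_entropy_factor (R : realType) (X Y : finType) (p : X -> Y -> R)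
    (m : X -> R) (K : X -> Y -> R) :
  (forall x y, p x y = m x * K x y) -> (forall x, \sum_y K x y = 1) ->
  cond_entropy p = \sum_x m x * entropy (K x).
Proof.
move=> pE K1; rewrite /cond_entropy -sumrN; apply: eq_bigr => x _.
rewrite /entropy mulrN mulr_sumr; congr (- _); apply: eq_bigr => y _.
have -> : \sum_y' p x y' = m x.
  by rewrite (eq_bigr _ (fun y' _ => pE x y')) -mulr_sumr K1 mulr1.
rewrite mulrA -pE; have [->|pNZ] := eqVneq (p x y) 0; first by rewrite mul0r.
have mNZ : m x != 0 by apply: contraNneq pNZ => m0; rewrite pE m0 mul0r.
by rewrite pE [m x * _]mulrC mulfK.
Qed.

Lemma sum_pair_pred1 (V : nmodType) (X Y : finType) (y0 : Y) (F : X * Y -> V) :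
  (forall x y, y != y0 -> F (x, y) = 0) -> \sum_p F p = \sum_x F (x, y0).
Proof.
move=> F0; rewrite (eq_bigr (fun p => F (p.1, p.2))) => [|[] //].
rewrite -(pair_bigA _ (fun x y => F (x, y))); apply: eq_bigr => x _.
by rewrite (bigD1 y0) //= big1 ?addr0 // => y; apply: F0.
Qed.

Lemma prod_ord_if (R : pzSemiRingType) n (F : 'I_n.+1 -> R) :
  \prod_(i < n.+1) (if (i < n)%N then F i else 1) =
  \prod_(i < n) F (widen_ord (leqnSn n) i).
Proof. by rewrite big_ord_recr /= ltnn mulr1; apply: eq_bigr => i _; rewrite ltn_ord. Qed.

Lemma orbit_indicator (R : comPzSemiRingType) (T : finType) (f : T -> T) (x0 : T) n
    (q : {ffun 'I_n.+1 -> T}) :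
  (q ord0 == x0)%:R * \prod_(i < n) (q (inord i.+1) == f (q (inord i)))%:R
  = (q == [ffun i : 'I_n.+1 => iter i f x0])%:R :> R.
Proof.
have [->|qN] := eqVneq q [ffun i : 'I_n.+1 => iter i f x0].
  rewrite ffunE eqxx mul1r big1 // => i _.
  rewrite !ffunE inordK; last by rewrite ltnS.
  by rewrite inordK ?eqxx // ltnS ltnW.
have [q0|] := eqVneq (q ord0) x0; last by rewrite mul0r.
have [i /negPf qi|qpath] := pickP (fun i : 'I_n => q (inord i.+1) != f (q (inord i))).
  by rewrite (bigD1 i) //= qi mul0r mulr0.
have qE m : (m < n.+1)%N -> q (inord m) = iter m f x0.
  elim: m => [_|m IH lt_mn].
    by rewrite -q0; congr (q _); apply: val_inj; rewrite /= inordK.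
  move/negbFE/eqP: (qpath (Ordinal (lt_mn : (m < n)%N))) => /= ->.
  by rewrite IH // ltnW.
by case/eqP: qN; apply/ffunP => j; rewrite ffunE -qE ?inord_val.
Qed.

Section Snoc.
Variables (S : finType) (n : nat).
Implicit Types (x : {ffun 'I_n.+1 -> S}) (y : S).

Lemma snoc_seq_widen x y (i : 'I_n.+1) : snoc_seq x y (widen_ord (leqnSn _) i) = x i.
Proof.
have -> : widen_ord (leqnSn _) i = lift ord_max i by apply: val_inj; rewrite [RHS]lift_max.
by rewrite /snoc_seq ffunE liftK.
Qed.

Lemma snoc_seq_max x y : snoc_seq x y ord_max = y.
Proof. by rewrite /snoc_seq ffunE unlift_none. Qed.

Lemma snoc_seq_inord x y m : (m <= n)%N -> snoc_seq x y (inord m) = x (inord m).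
Proof.
move=> le_mn; rewrite -(snoc_seq_widen x y); congr (snoc_seq x y _); apply: val_inj.
by rewrite /= !inordK // ltnS // ltnW.
Qed.

Lemma snoc_seq_inord_max x y : snoc_seq x y (inord n.+1) = y.
Proof.
by rewrite -[RHS](snoc_seq_max x y); congr (snoc_seq x y _); apply: val_inj; rewrite /= inordK.
Qed.

Lemma sum_snoc_seq (V : nmodType) (F : {ffun 'I_n.+2 -> S} -> V) :
  \sum_w F w = \sum_x \sum_y F (snoc_seq x y).
Proof.
rewrite pair_bigA /= (reindex (fun p : {ffun 'I_n.+1 -> S} * S => snoc_seq p.1 p.2)) //.
apply: onW_bij.
exists (fun w : {ffun 'I_n.+2 -> S} => ([ffun i => w (widen_ord (leqnSn _) i)], w ord_max)).
  move=> [x y] /=; rewrite snoc_seq_max; congr pair.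
  by apply/ffunP => i; rewrite ffunE snoc_seq_widen.
move=> w; apply/ffunP => j; rewrite /snoc_seq ffunE /=.
case: unliftP => [j' ->|->]; rewrite ?ffunE //.
by congr (w _); apply: val_inj; rewrite [RHS]lift_max.
Qed.

End Snoc.

Section DeterministicController.
Variables (R : realType) (S A Z : finType) (k : nat).
Variables (M : POMDP R S A Z) (C : FSC R A Z k).
Hypotheses (M_wf : POMDP_wf M) (C_wf : FSC_wf C) (C_det : deterministic_FSC C).

Definition next_mem (q : 'I_k) : 'I_k := odflt q [pick q' in Succ C q].

Lemma Succ_next_mem q : Succ C q = [set next_mem q].
Proof.
rewrite /next_mem; have /cards1P [q' ->] : #|Succ C q| == 1%N by rewrite C_det.
by case: pickP => [q'' /set1P ->|/(_ q')]; rewrite ?set11.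
Qed.

Lemma delta_next_mem q z a q' : fsc_delta C q z a q' = (q' == next_mem q)%:R.
Proof.
have [delta_ge0 delta_sum1] := (proj2 C_wf) q z a.
have delta0 q'' : q'' != next_mem q -> fsc_delta C q z a q'' = 0.
  move=> q''N; apply/eqP; rewrite eq_le delta_ge0 andbT leNgt; apply/negP => delta_gt0.
  have : q'' \in Succ C q by rewrite inE; apply/existsP; exists z; apply/existsP; exists a.
  by rewrite Succ_next_mem in_set1 (negbTE q''N).
have [->|/delta0 //] := eqVneq q' (next_mem q).
by rewrite (bigD1 (next_mem q)) //= big1 ?addr0 // in delta_sum1 => q'' /delta0.
Qed.

Definition state_kernel (q : 'I_k) (s s' : S) : R :=
  \sum_a \sum_z pm_O M s z * pm_P M s a s' * fsc_gamma C q z a.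

Lemma state_kernel_sum1 q s : \sum_s' state_kernel q s s' = 1.
Proof.
have [P_distr O_distr] := M_wf.
rewrite /state_kernel exchange_big /=.
transitivity (\sum_a \sum_z pm_O M s z * fsc_gamma C q z a).
  apply: eq_bigr => a _; rewrite exchange_big /=; apply: eq_bigr => z _.
  under eq_bigr do rewrite mulrAC.
  by rewrite -mulr_sumr (proj2 (P_distr s a)) mulr1.
rewrite exchange_big /= -(proj2 (O_distr s)); apply: eq_bigr => z _.
by rewrite -mulr_sumr (proj2 ((proj1 C_wf) q z)) mulr1.
Qed.

Lemma chain_PE x y :
  chain_P M C x y = (y.2 == next_mem x.2)%:R * state_kernel x.2 x.1 y.1.
Proof.
rewrite /chain_P /state_kernel mulr_sumr; apply: eq_bigr => a _.
by rewrite mulr_sumr; apply: eq_bigr => z _; rewrite delta_next_mem mulrC.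
Qed.

Lemma sum_chain_P (F : R -> R) x : F 0 = 0 ->
  \sum_y F (chain_P M C x y) = \sum_s' F (state_kernel x.2 x.1 s').
Proof.
move=> F0; rewrite (sum_pair_pred1 (y0 := next_mem x.2)) => [|s' q' /negbTE q'N].
  by apply: eq_bigr => s' _; rewrite chain_PE eqxx mul1r.
by rewrite chain_PE /= q'N mul0r.
Qed.

Definition mem_at n : 'I_k := iter n next_mem (fsc_q1 C).

Lemma chain_dist_mem_at n s q : q != mem_at n -> chain_dist M C n (s, q) = 0.
Proof.
elim: n s q => [|n IH] s q qN /=; first by rewrite xpair_eqE (negbTE qN) andbF.
apply: big1 => -[s0 q0] _; have [->|/IH ->] := eqVneq q0 (mem_at n); last by rewrite mul0r.
by rewrite chain_PE /= (negbTE qN) mul0r mulr0.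
Qed.

Definition state_marginal n (s : S) : R := chain_dist M C n (s, mem_at n).

Lemma state_marginalS n s' : state_marginal n.+1 s' =
  \sum_s state_marginal n s * state_kernel (mem_at n) s s'.
Proof.
rewrite /state_marginal /= (sum_pair_pred1 (y0 := mem_at n)) => [|s q /chain_dist_mem_at ->];
  last by rewrite mul0r.
by apply: eq_bigr => s _; rewrite chain_PE eqxx mul1r.
Qed.

Lemma H_chainE n :
  H_chain M C n = \sum_s state_marginal n s * entropy (state_kernel (mem_at n) s).
Proof.
rewrite /H_chain (cond_entropy_factor (m := chain_dist M C n) (K := chain_P M C)) //;
  last by move=> x; rewrite (sum_chain_P (F := id)) // state_kernel_sum1.
rewrite (sum_pair_pred1 (y0 := mem_at n)) => [|s q /chain_dist_mem_at ->];
  last by rewrite mul0r.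
apply: eq_bigr => s _; congr (_ * - _).
by rewrite (sum_chain_P (F := fun r => r * ln r)) ?mul0r.
Qed.

Definition state_path_prob n (s : {ffun 'I_n.+1 -> S}) : R :=
  (s ord0 == pm_sI M)%:R *
  \prod_(i < n) state_kernel (mem_at i) (s (inord i)) (s (inord i.+1)).

Section TrajectoryWeights.
Variables (n : nat) (s : {ffun 'I_n.+1 -> S}) (q : {ffun 'I_n.+1 -> 'I_k}).

(* Time n.+1 is the last one and carries no transition factor. *)
Definition step_weight (i : 'I_n.+1) (z : Z) (a : A) : R :=
  pm_O M (s i) z * fsc_gamma C (q i) z a *
  (if (i < n)%N then pm_P M (s (inord i)) a (s (inord i.+1)) *
                    fsc_delta C (q (inord i)) z a (q (inord i.+1))
   else 1).

Lemma traj_prob_step_weight z a : traj_prob M C s q z a =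
  ((s ord0 == pm_sI M) && (q ord0 == fsc_q1 C))%:R *
  \prod_i step_weight i (z i) (a i).
Proof.
rewrite /traj_prob /step_weight -mulrA [in RHS]big_split /= prod_ord_if.
congr (_ * (_ * _)); apply: eq_bigr => i _ /=.
rewrite (_ : widen_ord _ i = inord i) //.
by apply: val_inj; rewrite /= inordK // ltnS ltnW.
Qed.

Lemma sum_step_weight i : \sum_z \sum_a step_weight i z a =
  if (i < n)%N then (q (inord i.+1) == next_mem (q (inord i)))%:R *
                    state_kernel (q (inord i)) (s (inord i)) (s (inord i.+1))
  else 1.
Proof.
have [_ O_distr] := M_wf; rewrite /step_weight; case: ifP => _.
  rewrite /state_kernel exchange_big mulr_sumr; apply: eq_bigr => z _.
  by rewrite mulr_sumr; apply: eq_bigr => a _; rewrite delta_next_mem !inord_val; ring.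
rewrite -[RHS](proj2 (O_distr (s i))); apply: eq_bigr => z _.
by under eq_bigr do rewrite mulr1; rewrite -mulr_sumr (proj2 ((proj1 C_wf) _ _)) mulr1.
Qed.

Lemma sum_traj_prob : \sum_z \sum_a traj_prob M C s q z a =
  (s ord0 == pm_sI M)%:R *
  ((q ord0 == fsc_q1 C)%:R * \prod_(i < n) (q (inord i.+1) == next_mem (q (inord i)))%:R) *
  \prod_(i < n) state_kernel (q (inord i)) (s (inord i)) (s (inord i.+1)).
Proof.
transitivity (((s ord0 == pm_sI M) && (q ord0 == fsc_q1 C))%:R *
              \prod_i \sum_z \sum_a step_weight i z a).
  rewrite bigA_distr_bigA mulr_sumr; apply: eq_bigr => zs _.
  rewrite (bigA_distr_bigA (fun i a => step_weight i (zs i) a)) mulr_sumr.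
  by apply: eq_bigr => as_ _; rewrite traj_prob_step_weight.
rewrite (eq_bigr _ (fun i _ => sum_step_weight i)) prod_ord_if big_split /=.
by rewrite -mulnb natrM !mulrA.
Qed.

End TrajectoryWeights.

Lemma state_seq_probE n (s : {ffun 'I_n.+1 -> S}) :
  state_seq_prob M C s = state_path_prob s.
Proof.
rewrite /state_seq_prob; under eq_bigr do rewrite sum_traj_prob orbit_indicator.
pose mems := [ffun i : 'I_n.+1 => mem_at i].
rewrite (bigD1 mems) //= [X in _ + X]big1 ?addr0 => [|q /negbTE qN];
  last by rewrite qN mulr0 mul0r.
rewrite eqxx mulr1; congr (_ * _); apply: eq_bigr => i _.
by rewrite !ffunE !inordK // ltnS // ltnW.
Qed.

Lemma state_path_prob_snoc n (x : {ffun 'I_n.+1 -> S}) y :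
  state_path_prob (snoc_seq x y) =
  state_path_prob x * state_kernel (mem_at n) (x ord_max) y.
Proof.
rewrite /state_path_prob big_ord_recr /= -mulrA snoc_seq_inord // snoc_seq_inord_max.
have -> : snoc_seq x y ord0 = x ord0.
  by rewrite -(snoc_seq_widen x y); congr (snoc_seq x y _); apply: val_inj.
congr (_ * (_ * state_kernel _ (x _) _)); last by apply: val_inj; rewrite /= inordK.
by apply: eq_bigr => i _; rewrite /= !snoc_seq_inord // ltnW.
Qed.

Lemma sum_state_path_prob n (psi : S -> R) :
  \sum_(x : {ffun 'I_n.+1 -> S}) state_path_prob x * psi (x ord_max) =
  \sum_s state_marginal n s * psi s.
Proof.
elim: n psi => [|n IH] psi.
  transitivity (\sum_(x : {ffun 'I_1 -> S}) \prod_(i < 1) ((x i == pm_sI M)%:R * psi (x i))).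
    apply: eq_bigr => x _; rewrite big_ord1 /state_path_prob big_ord0 mulr1.
    by congr (_ * psi (x _)); apply: val_inj.
  rewrite -(bigA_distr_bigA (fun (_ : 'I_1) s => (s == pm_sI M)%:R * psi s)) big_ord1.
  apply: eq_bigr => s _.
  by rewrite /state_marginal /= xpair_eqE eqxx andbT.
rewrite sum_snoc_seq.
under eq_bigr do under eq_bigr do rewrite state_path_prob_snoc snoc_seq_max -mulrA.
under eq_bigr do rewrite -mulr_sumr.
rewrite (IH (fun s => \sum_y state_kernel (mem_at n) s y * psi y)).
under [RHS]eq_bigr do rewrite state_marginalS mulr_suml.
rewrite [RHS]exchange_big /=; apply: eq_bigr => s _; rewrite mulr_sumr.
by apply: eq_bigr => y _; rewrite mulrA.
Qed.

Lemma H_FSCE n :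
  H_FSC M C n = \sum_s state_marginal n s * entropy (state_kernel (mem_at n) s).
Proof.
rewrite /H_FSC (cond_entropy_factor (m := @state_path_prob n)
                  (K := fun x => state_kernel (mem_at n) (x ord_max))) => [||x].
- exact: sum_state_path_prob.
- by move=> x y; rewrite state_seq_probE state_path_prob_snoc.
- exact: state_kernel_sum1.
Qed.

End DeterministicController.

Theorem proposition1 (R : realType) (S A Z : finType) (k : nat)
  (M : POMDP R S A Z) (C : FSC R A Z k) :
  POMDP_wf M -> FSC_wf C -> deterministic_FSC C ->
  forall n : nat, (* t = n + 2 >= 2 *)
    H_FSC M C n = H_chain M C n.
Proof.
move=> M_wf C_wf C_det n.
by rewrite (H_FSCE M_wf C_wf C_det) (H_chainE M_wf C_wf C_det).
Qed.
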